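(* Let $\gamma_a,\gamma_s>0$, $\lambda\ge0$, $q>0$, $\sigma_B>0$, $\varepsilon_a\in(0,2)$, and let $\beta_a,\beta_s:\mathbb R\to\mathbb R$ be globally Lipschitz continuous with $\beta_a\ge0$, $\beta_s>0$. Define \[ f_1(T_a,T_s)=\tfrac{1}{\gamma_a}\big[-\lambda(T_a-T_s)+\varepsilon_a\sigma_B|T_s|^3T_s-2\varepsilon_a\sigma_B|T_a|^3T_a+q\beta_a(T_a)\big], \] \[ f_2(T_a,T_s)=\tfrac{1}{\gamma_s}\big[-\lambda(T_s-T_a)-\sigma_B|T_s|^3T_s+\varepsilon_a\sigma_B|T_a|^3T_a+q\beta_s(T_s)\big], \] and, with $\overline{\mathcal Q}=[0,+\infty)^2$, let $P_+=\{(T_a,T_s)\in\overline{\mathcal Q}: f_1(T_a,T_s)\ge0,\ f_2(T_a,T_s)\ge0\}$ and $P_-=\{(T_a,T_s)\in\overline{\mathcal Q}: f_1(T_a,T_s)\le0,\ f_2(T_a,T_s)\le0\}$. Let $(T_a,T_s)$ be the solution of $T_a'=f_1(T_a,T_s)$, $T_s'=f_2(T_a,T_s)$, $(T_a,T_s)(0)=(T_a^{(0)},T_s^{(0)})$. If $(T_a^{(0)},T_s^{(0)})\in P_+$, then both $t\mapsto T_a(t)$ and $t\mapsto T_s(t)$ are nondecreasing; if $(T_a^{(0)},T_s^{(0)})\in P_-$, then both are nonincreasing. *)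

From Stdlib Require Import Reals.
From Coquelicot Require Import Coquelicot.
Open Scope R_scope.

Definition globally_lipschitz (b : R -> R) : Prop :=
  exists L : R, forall x y : R, Rabs (b x - b y) <= L * Rabs (x - y).

Definition f1 (ga lam q sB ea : R) (ba : R -> R) (Ta Ts : R) : R :=
  / ga * ( - lam * (Ta - Ts) + ea * sB * (Rabs Ts ^ 3 * Ts)
           - 2 * ea * sB * (Rabs Ta ^ 3 * Ta) + q * ba Ta ).

Definition f2 (gs lam q sB ea : R) (bs : R -> R) (Ta Ts : R) : R :=
  / gs * ( - lam * (Ts - Ta) - sB * (Rabs Ts ^ 3 * Ts)
           + ea * sB * (Rabs Ta ^ 3 * Ta) + q * bs Ts ).

Definition P_plus ga gs lam q sB ea ba bs (Ta Ts : R) : Prop :=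
  0 <= Ta /\ 0 <= Ts /\
  0 <= f1 ga lam q sB ea ba Ta Ts /\ 0 <= f2 gs lam q sB ea bs Ta Ts.

Definition P_minus ga gs lam q sB ea ba bs (Ta Ts : R) : Prop :=
  0 <= Ta /\ 0 <= Ts /\
  f1 ga lam q sB ea ba Ta Ts <= 0 /\ f2 gs lam q sB ea bs Ta Ts <= 0.

Definition is_solution ga gs lam q sB ea ba bs (tau : Rbar) (Ta0 Ts0 : R)
  (Ta Ts : R -> R) : Prop :=
  Ta 0 = Ta0 /\ Ts 0 = Ts0 /\
  filterlim Ta (at_right 0) (locally (Ta 0)) /\
  filterlim Ts (at_right 0) (locally (Ts 0)) /\
  (forall t : R, 0 < t -> Rbar_lt t tau ->
     is_derive Ta t (f1 ga lam q sB ea ba (Ta t) (Ts t)) /\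
     is_derive Ts t (f2 gs lam q sB ea bs (Ta t) (Ts t))).

(* The system is cooperative: f1 is nondecreasing in T_s and f2 in T_a, because
   z |-> |z|^3 z is nondecreasing, and both are Lipschitz on bounded sets.  For such a
   system a supersolution x starting above a subsolution y stays above it: the sum N of
   the squared negative parts of x_i - y_i satisfies N' <= k N with N(0+) = 0, so N = 0.
   On P_+ the constant initial state is a subsolution, hence x(h) >= x(0) for all h; the
   shifted solution t |-> x(t + h) then starts above x, hence x(t + h) >= x(t).  On P_-
   every inequality is reversed. *)

From Stdlib Require Import Reals Lra.
From Coquelicot Require Import Coquelicot.
Open Scope R_scope.

Definition spow4 (z : R) : R := Rabs z ^ 3 * z.

Lemma spow4_nonneg z : 0 <= z -> spow4 z = z ^ 4.
Proof. intros Hz; unfold spow4; rewrite Rabs_pos_eq by lra; ring. Qed.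

Lemma spow4_neg z : z < 0 -> spow4 z = - (- z) ^ 4.
Proof. intros Hz; unfold spow4; rewrite Rabs_left by lra; ring. Qed.

Lemma pow4_le_pow3_mul u M : 0 <= u <= M -> u ^ 4 <= M ^ 3 * u.
Proof.
  intros Hu; replace (u ^ 4) with (u ^ 3 * u) by ring.
  apply Rmult_le_compat_r; [lra | apply pow_incr; lra].
Qed.

Lemma pow4_sub_le u v M : 0 <= u <= v -> v <= M -> v ^ 4 - u ^ 4 <= 4 * M ^ 3 * (v - u).
Proof.
  intros Huv HvM.
  replace (v ^ 4 - u ^ 4) with ((v ^ 3 + v ^ 2 * u + v * u ^ 2 + u ^ 3) * (v - u)) by ring.
  apply Rmult_le_compat_r; [lra|].
  assert (Hu3 : u ^ 3 <= M ^ 3) by (apply pow_incr; lra).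
  assert (Hv3 : v ^ 3 <= M ^ 3) by (apply pow_incr; lra).
  assert (Hv2 : v ^ 2 <= M ^ 2) by (apply pow_incr; lra).
  assert (Hu2 : u ^ 2 <= M ^ 2) by (apply pow_incr; lra).
  assert (v ^ 2 * u <= M ^ 2 * M) by (apply Rmult_le_compat; try apply pow_le; lra).
  assert (v * u ^ 2 <= M * M ^ 2) by (apply Rmult_le_compat; try apply pow_le; lra).
  replace (M ^ 3) with (M ^ 2 * M) in * by ring. lra.
Qed.

Lemma spow4_le a b : a <= b -> spow4 a <= spow4 b.
Proof.
  intros Hab.
  destruct (Rle_or_lt 0 a) as [Ha|Ha]; [|destruct (Rle_or_lt 0 b) as [Hb|Hb]].
  - rewrite !spow4_nonneg by lra. apply pow_incr; lra.
  - rewrite spow4_neg, spow4_nonneg by lra.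
    pose proof (pow_le (- a) 4); pose proof (pow_le b 4); lra.
  - rewrite !spow4_neg by lra. assert ((- b) ^ 4 <= (- a) ^ 4) by (apply pow_incr; lra). lra.
Qed.

Lemma spow4_sub_le a b M : b <= a -> Rabs a <= M -> Rabs b <= M ->
  spow4 a - spow4 b <= 4 * M ^ 3 * (a - b).
Proof.
  intros Hab Ha Hb; apply Rabs_le_between in Ha; apply Rabs_le_between in Hb.
  destruct (Rle_or_lt 0 b) as [Hb0|Hb0]; [|destruct (Rle_or_lt 0 a) as [Ha0|Ha0]].
  - rewrite !spow4_nonneg by lra. apply pow4_sub_le; lra.
  - rewrite spow4_nonneg, spow4_neg by lra.
    pose proof (pow4_le_pow3_mul a M); pose proof (pow4_le_pow3_mul (- b) M).
    assert (0 <= M ^ 3) by (apply pow_le; lra). nra.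
  - rewrite !spow4_neg by lra.
    pose proof (pow4_sub_le (- a) (- b) M). lra.
Qed.

Lemma spow4_lipschitz a b M : Rabs a <= M -> Rabs b <= M ->
  Rabs (spow4 a - spow4 b) <= 4 * M ^ 3 * Rabs (a - b).
Proof.
  intros Ha Hb. destruct (Rle_or_lt b a) as [Hab|Hab].
  - pose proof (spow4_le b a Hab). pose proof (spow4_sub_le a b M Hab Ha Hb).
    rewrite !Rabs_pos_eq by lra. lra.
  - pose proof (spow4_le a b (Rlt_le _ _ Hab)).
    pose proof (spow4_sub_le b a M (Rlt_le _ _ Hab) Hb Ha).
    rewrite Rabs_left1, (Rabs_left1 (a - b)) by lra. lra.
Qed.

Lemma filterlim_Rmult {T : Type} {F : (T -> Prop) -> Prop} {FF : Filter F}
  (f g : T -> R) (a b : R) :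
  filterlim f F (locally a) -> filterlim g F (locally b) ->
  filterlim (fun t => f t * g t) F (locally (a * b)).
Proof. intros Hf Hg. exact (filterlim_comp_2 _ _ _ Hf Hg (filterlim_mult a b)). Qed.

Lemma filterlim_Rplus {T : Type} {F : (T -> Prop) -> Prop} {FF : Filter F}
  (f g : T -> R) (a b : R) :
  filterlim f F (locally a) -> filterlim g F (locally b) ->
  filterlim (fun t => f t + g t) F (locally (a + b)).
Proof. intros Hf Hg. exact (filterlim_comp_2 _ _ _ Hf Hg (filterlim_plus a b)). Qed.

Lemma filterlim_Rminus {T : Type} {F : (T -> Prop) -> Prop} {FF : Filter F}
  (f g : T -> R) (a b : R) :
  filterlim f F (locally a) -> filterlim g F (locally b) ->
  filterlim (fun t => f t - g t) F (locally (a - b)).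
Proof.
  intros Hf Hg. apply filterlim_Rplus; [exact Hf|].
  exact (filterlim_comp _ _ _ _ _ _ _ _ Hg (filterlim_opp (V := R_NormedModule) b)).
Qed.

Lemma at_right_lt (a t : R) : a < t -> at_right a (fun s => a < s < t).
Proof.
  intros Hat. exists (mkposreal (t - a) ltac:(lra)). intros s Hs Has.
  change (Rabs (s - a) < t - a) in Hs. apply Rabs_lt_between' in Hs. lra.
Qed.

Lemma nonincreasing_le_right_limit (W : R -> R) (a l T : R) :
  (forall s t, a < s -> s <= t -> t <= T -> W t <= W s) ->
  filterlim W (at_right a) (locally l) -> forall t, a < t <= T -> W t <= l.
Proof.
  intros Hmono Hlim t Ht. apply Rnot_lt_le; intros Hlt.
  assert (Hev : at_right a (fun s => a < s < t /\ ball l (W t - l) (W s))).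
  { apply filter_and; [now apply at_right_lt|].
    apply Hlim, (locally_ball l (mkposreal (W t - l) ltac:(lra))). }
  destruct (filter_ex _ Hev) as [s [Hs Hball]].
  change (Rabs (W s - l) < W t - l) in Hball. apply Rabs_lt_between' in Hball.
  pose proof (Hmono s t (proj1 Hs) (Rlt_le _ _ (proj2 Hs)) (proj2 Ht)). lra.
Qed.

Lemma nonincreasing_of_derive_nonpos (W dW : R -> R) (a T : R) :
  (forall t, a < t <= T -> is_derive W t (dW t)) -> (forall t, a < t <= T -> dW t <= 0) ->
  forall s t, a < s -> s <= t -> t <= T -> W t <= W s.
Proof.
  intros HW HdW s t Hs Hst HtT.
  destruct (MVT_gen W s t dW) as [c [Hc Heq]];
    rewrite ?Rmin_left, ?Rmax_right in * by lra.
  - intros u Hu. apply HW; lra.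
  - intros u Hu. apply continuity_pt_filterlim, (ex_derive_continuous W u).
    exists (dW u); apply HW; lra.
  - assert (dW c <= 0) by (apply HdW; lra). nra.
Qed.

(* Weighting by exp (- k t) turns dN <= k N into a nonincreasing quantity. *)
Lemma gronwall_nonpos (N dN : R -> R) (k T : R) :
  (forall t, 0 < t <= T -> is_derive N t (dN t)) -> (forall t, 0 < t <= T -> dN t <= k * N t) ->
  filterlim N (at_right 0) (locally 0) -> forall t, 0 < t <= T -> N t <= 0.
Proof.
  intros HN HdN Hlim t Ht.
  set (W := fun u => N u * exp (- k * u)).
  assert (HW : forall u, 0 < u <= T -> is_derive W u ((dN u - k * N u) * exp (- k * u))).
  { intros u Hu. unfold W.
    replace ((dN u - k * N u) * exp (- k * u))
      with (dN u * exp (- k * u) + N u * ((- k * 1) * exp (- k * u))) by ring.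
    apply (is_derive_mult N (fun u => exp (- k * u))); [apply HN, Hu| |exact Rmult_comm].
    apply (is_derive_comp exp (fun u => - k * u)); [apply is_derive_exp|].
    apply is_derive_scal, (is_derive_id (K := R_AbsRing)). }
  assert (Hmono : forall s u, 0 < s -> s <= u -> u <= T -> W u <= W s).
  { apply (nonincreasing_of_derive_nonpos W _ 0 T HW). intros u Hu.
    pose proof (HdN u Hu); pose proof (exp_pos (- k * u)). nra. }
  assert (HWlim : filterlim W (at_right 0) (locally (0 * exp (- k * 0)))).
  { apply filterlim_Rmult; [exact Hlim|].
    apply (filterlim_filter_le_1 _ (filter_le_within _)).
    apply continuous_exp_comp, (ex_derive_continuous (fun u => - k * u)). auto_derive; auto. }
  rewrite Rmult_0_l in HWlim.
  pose proof (nonincreasing_le_right_limit W 0 0 T Hmono HWlim t Ht) as HWt.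
  unfold W in HWt. pose proof (exp_pos (- k * t)). nra.
Qed.

Lemma bounded_of_derivable (f : R -> R) (T : R) :
  filterlim f (at_right 0) (locally (f 0)) -> (forall t, 0 < t <= T -> ex_derive f t) ->
  exists M, forall t, 0 <= t <= T -> Rabs (f t) <= M.
Proof.
  intros H0 Hd.
  destruct (H0 _ (locally_ball (f 0) (mkposreal 1 Rlt_0_1))) as [d Hd0].
  destruct (bounded_continuity f (d / 2) T) as [M HM].
  { intros x Hx. apply (ex_derive_continuous f x), Hd. pose proof (cond_pos d). lra. }
  exists (Rmax (Rabs (f 0) + 1) M). intros t Ht.
  destruct (Rlt_or_le t (d / 2)) as [Htd|Htd].
  - apply Rle_trans with (Rabs (f 0) + 1); [|apply Rmax_l].
    destruct (Req_dec t 0) as [->|Ht0]; [lra|].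
    assert (Hball : Rabs (f t - f 0) < 1).
    { apply (Hd0 t); [change (Rabs (t - 0) < d); rewrite Rabs_pos_eq|]; lra. }
    pose proof (Rabs_triang_inv (f t) (f 0)). lra.
  - apply Rle_trans with M; [|apply Rmax_r].
    apply Rlt_le, (HM t). lra.
Qed.

Lemma is_derive_shift (f : R -> R) h t df :
  is_derive f (t + h) df -> is_derive (fun u => f (u + h)) t df.
Proof.
  intros Hf. assert (Hs : is_derive (fun u => u + h) t 1) by (auto_derive; auto; ring).
  replace df with (1 * df) by ring. exact (is_derive_comp f (fun u => u + h) t df 1 Hf Hs).
Qed.

Definition negpart (z : R) : R := Rmax 0 (- z).

Lemma negpart_ge0 z : 0 <= negpart z.
Proof. apply Rmax_l. Qed.

Lemma negpart_of_ge0 z : 0 <= z -> negpart z = 0.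
Proof. intros Hz; apply Rmax_left; lra. Qed.

Lemma negpart_of_lt0 z : z < 0 -> negpart z = - z.
Proof. intros Hz; apply Rmax_right; lra. Qed.

Lemma negpart_mul_le z c d : (z < 0 -> c <= d) -> negpart z * c <= negpart z * d.
Proof.
  intros H. destruct (Rle_or_lt 0 z) as [Hz|Hz].
  - rewrite negpart_of_ge0 by exact Hz; lra.
  - apply Rmult_le_compat_l; [apply negpart_ge0 | auto].
Qed.

Lemma negpart_sq_add_nonpos z w : negpart z ^ 2 + negpart w ^ 2 <= 0 -> 0 <= z /\ 0 <= w.
Proof.
  intros H. pose proof (pow2_ge_0 (negpart z)); pose proof (pow2_ge_0 (negpart w)).
  split; apply Rnot_lt_le; intros Hlt; rewrite (negpart_of_lt0 _ Hlt) in H; nra.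
Qed.

Lemma Rabs_Rmin_sub b b' : Rabs (Rmin b b' - b') = negpart (b - b').
Proof.
  destruct (Rle_or_lt b b') as [H|H].
  - rewrite Rmin_left, Rabs_left1 by lra. unfold negpart; rewrite Rmax_right; lra.
  - rewrite Rmin_right, Rminus_diag, Rabs_R0, negpart_of_ge0 by lra. reflexivity.
Qed.

Lemma is_derive_negpart_sq z : is_derive (fun u => negpart u ^ 2) z (-2 * negpart z).
Proof.
  apply is_derive_Reals. intros e He. exists (mkposreal e He). intros h Hh0 Hh. simpl in Hh.
  assert (Hrem : Rabs (negpart (z + h) ^ 2 - negpart z ^ 2 + 2 * negpart z * h) <= h * h).
  { unfold negpart, Rmax.
    destruct (Rle_dec 0 (- (z + h))), (Rle_dec 0 (- z)); apply Rabs_le; nra. }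
  replace ((negpart (z + h) ^ 2 - negpart z ^ 2) / h - -2 * negpart z)
    with ((negpart (z + h) ^ 2 - negpart z ^ 2 + 2 * negpart z * h) / h) by (field; exact Hh0).
  assert (Hh1 : 0 < Rabs h) by (apply Rabs_pos_lt, Hh0).
  unfold Rdiv; rewrite Rabs_mult, Rabs_inv.
  apply Rle_lt_trans with (Rabs h); [|exact Hh].
  apply Rmult_le_reg_r with (Rabs h); [exact Hh1|].
  rewrite Rmult_assoc, Rinv_l, Rmult_1_r by lra.
  rewrite <- Rabs_mult, (Rabs_pos_eq (h * h)) by apply Rle_0_sqr. exact Hrem.
Qed.

Lemma is_derive_negpart_sq_sub (x y : R -> R) u dx dy :
  is_derive x u dx -> is_derive y u dy ->
  is_derive (fun t => negpart (x t - y t) ^ 2) u (-2 * negpart (x u - y u) * (dx - dy)).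
Proof.
  intros Hx Hy. replace (-2 * negpart (x u - y u) * (dx - dy))
    with ((dx - dy) * (-2 * negpart (x u - y u))) by ring.
  apply (is_derive_comp (fun z => negpart z ^ 2) (fun t => x t - y t));
    [apply is_derive_negpart_sq | apply (is_derive_minus x y); assumption].
Qed.

Lemma negpart_sq_right_limit (x y : R -> R) :
  filterlim x (at_right 0) (locally (x 0)) -> filterlim y (at_right 0) (locally (y 0)) ->
  y 0 <= x 0 -> filterlim (fun t => negpart (x t - y t) ^ 2) (at_right 0) (locally 0).
Proof.
  intros Hx Hy Hxy.
  assert (Hcont : continuous (fun u => negpart u ^ 2) (x 0 - y 0))
    by (apply (ex_derive_continuous (fun u => negpart u ^ 2)); eexists; apply is_derive_negpart_sq).
  pose proof (filterlim_comp _ _ _ _ _ _ _ _ (filterlim_Rminus x y _ _ Hx Hy) Hcont) as Hlim.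
  cbv beta in Hlim. rewrite negpart_of_ge0 in Hlim by lra.
  replace (0 ^ 2) with 0 in Hlim by ring. exact Hlim.
Qed.

Definition locally_lipschitz (g : R -> R) : Prop :=
  forall M, exists L, 0 <= L /\ forall a a', Rabs a <= M -> Rabs a' <= M ->
    Rabs (g a - g a') <= L * Rabs (a - a').

Lemma globally_lipschitz_locally g : globally_lipschitz g -> locally_lipschitz g.
Proof.
  intros [L HL] M. exists (Rabs L); split; [apply Rabs_pos|].
  intros a a' _ _. eapply Rle_trans; [apply HL|].
  apply Rmult_le_compat_r; [apply Rabs_pos | apply Rle_abs].
Qed.

Lemma locally_lipschitz_id : locally_lipschitz (fun x => x).
Proof. intros M; exists 1; split; [lra|]. intros a a' _ _; lra. Qed.

Lemma locally_lipschitz_spow4 : locally_lipschitz spow4.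
Proof.
  intros M. exists (4 * Rabs M ^ 3); split.
  - apply Rmult_le_pos; [lra | apply pow_le, Rabs_pos].
  - intros a a' Ha Ha'. apply spow4_lipschitz; eapply Rle_trans; eauto using RRle_abs.
Qed.

Lemma locally_lipschitz_scal c g : locally_lipschitz g -> locally_lipschitz (fun x => c * g x).
Proof.
  intros Hg M. destruct (Hg M) as [L [HL Hlip]].
  exists (Rabs c * L); split; [apply Rmult_le_pos; [apply Rabs_pos | exact HL]|].
  intros a a' Ha Ha'. rewrite <- Rmult_minus_distr_l, Rabs_mult, Rmult_assoc.
  apply Rmult_le_compat_l; [apply Rabs_pos | auto].
Qed.

Lemma locally_lipschitz_plus g h :
  locally_lipschitz g -> locally_lipschitz h -> locally_lipschitz (fun x => g x + h x).
Proof.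
  intros Hg Hh M. destruct (Hg M) as [Lg [HLg Hg']], (Hh M) as [Lh [HLh Hh']].
  exists (Lg + Lh); split; [lra|]. intros a a' Ha Ha'.
  specialize (Hg' a a' Ha Ha'); specialize (Hh' a a' Ha Ha').
  replace (g a + h a - (g a' + h a')) with ((g a - g a') + (h a - h a')) by ring.
  eapply Rle_trans; [apply Rabs_triang | lra].
Qed.

Definition lipschitz2_on (M L : R) (F : R -> R -> R) : Prop :=
  forall a b a' b', Rabs a <= M -> Rabs b <= M -> Rabs a' <= M -> Rabs b' <= M ->
    Rabs (F a b - F a' b') <= L * (Rabs (a - a') + Rabs (b - b')).

Definition locally_lipschitz2 (F : R -> R -> R) : Prop :=
  forall M, exists L, 0 <= L /\ lipschitz2_on M L F.

Lemma lipschitz2_on_swap M L F : lipschitz2_on M L F -> lipschitz2_on M L (fun b a => F a b).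
Proof. intros HF b a b' a' Hb Ha Hb' Ha'. rewrite Rplus_comm. auto. Qed.

Lemma locally_lipschitz2_separable (F : R -> R -> R) c g h :
  (forall a b, F a b = c * (g a + h b)) ->
  locally_lipschitz g -> locally_lipschitz h -> locally_lipschitz2 F.
Proof.
  intros HF Hg Hh M. destruct (Hg M) as [Lg [HLg Hg']], (Hh M) as [Lh [HLh Hh']].
  exists (Rabs c * (Lg + Lh)); split; [apply Rmult_le_pos; [apply Rabs_pos | lra]|].
  intros a b a' b' Ha Hb Ha' Hb'. rewrite !HF.
  specialize (Hg' a a' Ha Ha'); specialize (Hh' b b' Hb Hb').
  replace (c * (g a + h b) - c * (g a' + h b')) with (c * ((g a - g a') + (h b - h b'))) by ring.
  rewrite Rabs_mult, Rmult_assoc. apply Rmult_le_compat_l; [apply Rabs_pos|].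
  pose proof (Rabs_pos (a - a')); pose proof (Rabs_pos (b - b')).
  eapply Rle_trans; [apply Rabs_triang | nra].
Qed.

(* Lowering the second argument to [Rmin b b'] first uses monotonicity, so that only
   the negative parts of the differences enter the Lipschitz estimate. *)
Lemma monotone2_lipschitz_lower (G : R -> R -> R) M L a b a' b' :
  (forall u v v', v <= v' -> G u v <= G u v') -> lipschitz2_on M L G ->
  Rabs a <= M -> Rabs b <= M -> Rabs a' <= M -> Rabs b' <= M -> a < a' ->
  G a' b' - L * (negpart (a - a') + negpart (b - b')) <= G a b.
Proof.
  intros Hmono Hlip Ha Hb Ha' Hb' Haa'.
  assert (Hmin : Rabs (Rmin b b') <= M) by (unfold Rmin; destruct Rle_dec; auto).
  pose proof (Hmono a _ _ (Rmin_l b b')) as Hdown.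
  pose proof (Hlip a (Rmin b b') a' b' Ha Hmin Ha' Hb') as Hclose.
  rewrite Rabs_Rmin_sub, (Rabs_left (a - a')), <- (negpart_of_lt0 (a - a')) in Hclose by lra.
  apply Rabs_le_between in Hclose. lra.
Qed.

Section CooperativeSystem.

Variables F1 F2 : R -> R -> R.

Definition is_supersolution (T : R) (x1 x2 : R -> R) : Prop :=
  filterlim x1 (at_right 0) (locally (x1 0)) /\ filterlim x2 (at_right 0) (locally (x2 0)) /\
  forall t, 0 < t <= T -> ex_derive x1 t /\ ex_derive x2 t /\
    F1 (x1 t) (x2 t) <= Derive x1 t /\ F2 (x1 t) (x2 t) <= Derive x2 t.

Definition is_subsolution (T : R) (x1 x2 : R -> R) : Prop :=
  filterlim x1 (at_right 0) (locally (x1 0)) /\ filterlim x2 (at_right 0) (locally (x2 0)) /\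
  forall t, 0 < t <= T -> ex_derive x1 t /\ ex_derive x2 t /\
    Derive x1 t <= F1 (x1 t) (x2 t) /\ Derive x2 t <= F2 (x1 t) (x2 t).

Hypothesis F1_monotone : forall a b b', b <= b' -> F1 a b <= F1 a b'.
Hypothesis F2_monotone : forall a a' b, a <= a' -> F2 a b <= F2 a' b.
Hypothesis F1_lipschitz : locally_lipschitz2 F1.
Hypothesis F2_lipschitz : locally_lipschitz2 F2.

Lemma negpart_sq_derivative_bound M L1 L2 a1 a2 b1 b2 d1 d2 e1 e2 :
  lipschitz2_on M L1 F1 -> lipschitz2_on M L2 F2 -> 0 <= L1 -> 0 <= L2 ->
  Rabs a1 <= M -> Rabs a2 <= M -> Rabs b1 <= M -> Rabs b2 <= M ->
  F1 a1 a2 <= d1 -> F2 a1 a2 <= d2 -> e1 <= F1 b1 b2 -> e2 <= F2 b1 b2 ->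
  -2 * negpart (a1 - b1) * (d1 - e1) + -2 * negpart (a2 - b2) * (d2 - e2)
    <= 4 * (L1 + L2) * (negpart (a1 - b1) ^ 2 + negpart (a2 - b2) ^ 2).
Proof.
  intros HL1 HL2 HL1p HL2p Ha1 Ha2 Hb1 Hb2 Hd1 Hd2 He1 He2.
  assert (G1 : negpart (a1 - b1) * (- (L1 * (negpart (a1 - b1) + negpart (a2 - b2))))
                 <= negpart (a1 - b1) * (d1 - e1)).
  { apply negpart_mul_le; intros Hlt.
    pose proof (monotone2_lipschitz_lower F1 M L1 a1 a2 b1 b2 F1_monotone HL1
                  Ha1 Ha2 Hb1 Hb2 ltac:(lra)). lra. }
  assert (G2 : negpart (a2 - b2) * (- (L2 * (negpart (a1 - b1) + negpart (a2 - b2))))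
                 <= negpart (a2 - b2) * (d2 - e2)).
  { apply negpart_mul_le; intros Hlt.
    pose proof (monotone2_lipschitz_lower (fun b a => F2 a b) M L2 a2 a1 b2 b1
                  (fun u v v' => F2_monotone v v' u) (lipschitz2_on_swap _ _ _ HL2)
                  Ha2 Ha1 Hb2 Hb1 ltac:(lra)). lra. }
  pose proof (negpart_ge0 (a1 - b1)); pose proof (negpart_ge0 (a2 - b2)).
  set (n1 := negpart (a1 - b1)) in *; set (n2 := negpart (a2 - b2)) in *.
  assert (0 <= (L1 + L2) * (n1 - n2) ^ 2) by (apply Rmult_le_pos; [lra | apply pow2_ge_0]).
  assert (0 <= L1 * n2 ^ 2) by (apply Rmult_le_pos; [lra | apply pow2_ge_0]).
  assert (0 <= L2 * n1 ^ 2) by (apply Rmult_le_pos; [lra | apply pow2_ge_0]).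
  nra.
Qed.

Lemma subsolution_le_supersolution T x1 x2 y1 y2 :
  is_supersolution T x1 x2 -> is_subsolution T y1 y2 -> y1 0 <= x1 0 -> y2 0 <= x2 0 ->
  forall t, 0 <= t <= T -> y1 t <= x1 t /\ y2 t <= x2 t.
Proof.
  intros [Hx1 [Hx2 Hx]] [Hy1 [Hy2 Hy]] H01 H02 t Ht.
  destruct (Req_dec t 0) as [->|Ht0]; [lra|].
  destruct (bounded_of_derivable x1 T Hx1) as [M1 HM1]; [apply Hx|].
  destruct (bounded_of_derivable x2 T Hx2) as [M2 HM2]; [apply Hx|].
  destruct (bounded_of_derivable y1 T Hy1) as [M3 HM3]; [apply Hy|].
  destruct (bounded_of_derivable y2 T Hy2) as [M4 HM4]; [apply Hy|].
  set (M := Rabs M1 + Rabs M2 + Rabs M3 + Rabs M4).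
  assert (HM : forall u, 0 <= u <= T ->
    Rabs (x1 u) <= M /\ Rabs (x2 u) <= M /\ Rabs (y1 u) <= M /\ Rabs (y2 u) <= M).
  { intros u Hu. specialize (HM1 u Hu); specialize (HM2 u Hu);
      specialize (HM3 u Hu); specialize (HM4 u Hu).
    pose proof (Rle_abs M1); pose proof (Rle_abs M2); pose proof (Rle_abs M3);
      pose proof (Rle_abs M4); pose proof (Rabs_pos M1); pose proof (Rabs_pos M2);
      pose proof (Rabs_pos M3); pose proof (Rabs_pos M4).
    unfold M; repeat split; lra. }
  destruct (F1_lipschitz M) as [L1 [HL1p HL1]], (F2_lipschitz M) as [L2 [HL2p HL2]].
  set (N := fun u => negpart (x1 u - y1 u) ^ 2 + negpart (x2 u - y2 u) ^ 2).
  set (dN := fun u => -2 * negpart (x1 u - y1 u) * (Derive x1 u - Derive y1 u)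
                    + -2 * negpart (x2 u - y2 u) * (Derive x2 u - Derive y2 u)).
  assert (HN : forall u, 0 < u <= T -> is_derive N u (dN u)).
  { intros u Hu. destruct (Hx u Hu) as [Dx1 [Dx2 _]], (Hy u Hu) as [Dy1 [Dy2 _]].
    apply (is_derive_plus (fun u => negpart (x1 u - y1 u) ^ 2)
                          (fun u => negpart (x2 u - y2 u) ^ 2));
      apply is_derive_negpart_sq_sub; apply Derive_correct; assumption. }
  assert (HdN : forall u, 0 < u <= T -> dN u <= 4 * (L1 + L2) * N u).
  { intros u Hu. destruct (Hx u Hu) as [_ [_ [Sx1 Sx2]]], (Hy u Hu) as [_ [_ [Sy1 Sy2]]].
    destruct (HM u ltac:(lra)) as [Bx1 [Bx2 [By1 By2]]].
    apply (negpart_sq_derivative_bound M); assumption. }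
  assert (Hlim : filterlim N (at_right 0) (locally (0 + 0)))
    by (apply filterlim_Rplus; apply negpart_sq_right_limit; assumption).
  rewrite Rplus_0_l in Hlim.
  destruct (negpart_sq_add_nonpos (x1 t - y1 t) (x2 t - y2 t)) as [E1 E2]; [|lra].
  apply (gronwall_nonpos N dN (4 * (L1 + L2)) T HN HdN Hlim). lra.
Qed.

Definition is_solution_on (T : R) (x1 x2 : R -> R) : Prop :=
  filterlim x1 (at_right 0) (locally (x1 0)) /\ filterlim x2 (at_right 0) (locally (x2 0)) /\
  forall t, 0 < t <= T -> is_derive x1 t (F1 (x1 t) (x2 t)) /\ is_derive x2 t (F2 (x1 t) (x2 t)).

Lemma solution_is_supersolution T x1 x2 : is_solution_on T x1 x2 -> is_supersolution T x1 x2.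
Proof.
  intros [H1 [H2 H]]. split; [exact H1|split; [exact H2|]].
  intros t Ht. destruct (H t Ht) as [D1 D2].
  rewrite (is_derive_unique _ _ _ D1), (is_derive_unique _ _ _ D2).
  repeat split; try apply Rle_refl; eexists; eassumption.
Qed.

Lemma solution_is_subsolution T x1 x2 : is_solution_on T x1 x2 -> is_subsolution T x1 x2.
Proof.
  intros [H1 [H2 H]]. split; [exact H1|split; [exact H2|]].
  intros t Ht. destruct (H t Ht) as [D1 D2].
  rewrite (is_derive_unique _ _ _ D1), (is_derive_unique _ _ _ D2).
  repeat split; try apply Rle_refl; eexists; eassumption.
Qed.

Lemma const_supersolution T a b : F1 a b <= 0 -> F2 a b <= 0 ->
  is_supersolution T (fun _ => a) (fun _ => b).
Proof.
  intros H1 H2. split; [apply filterlim_const|split; [apply filterlim_const|]].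
  intros t Ht. rewrite !Derive_const. repeat split; try assumption; apply ex_derive_const.
Qed.

Lemma const_subsolution T a b : 0 <= F1 a b -> 0 <= F2 a b ->
  is_subsolution T (fun _ => a) (fun _ => b).
Proof.
  intros H1 H2. split; [apply filterlim_const|split; [apply filterlim_const|]].
  intros t Ht. rewrite !Derive_const. repeat split; try assumption; apply ex_derive_const.
Qed.

Lemma solution_on_le T T' x1 x2 : T' <= T -> is_solution_on T x1 x2 -> is_solution_on T' x1 x2.
Proof.
  intros HT [H1 [H2 H]]. split; [exact H1|split; [exact H2|]].
  intros t Ht. apply H; lra.
Qed.

Lemma solution_on_shift T h x1 x2 : 0 <= T -> 0 < h -> is_solution_on (T + h) x1 x2 ->
  is_solution_on T (fun u => x1 (u + h)) (fun u => x2 (u + h)).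
Proof.
  intros HT Hh [H1 [H2 H]].
  assert (Hshift : filterlim (fun u => u + h) (at_right 0) (locally (0 + h))).
  { apply (filterlim_filter_le_1 _ (filter_le_within _)).
    apply (ex_derive_continuous (fun u => u + h)). auto_derive; auto. }
  destruct (H h ltac:(lra)) as [Dh1 Dh2].
  rewrite Rplus_0_l in Hshift. split; [|split]; rewrite ?Rplus_0_l.
  - exact (filterlim_comp _ _ _ _ _ _ _ _ Hshift (ex_derive_continuous x1 h (ex_intro _ _ Dh1))).
  - exact (filterlim_comp _ _ _ _ _ _ _ _ Hshift (ex_derive_continuous x2 h (ex_intro _ _ Dh2))).
  - intros t Ht. destruct (H (t + h) ltac:(lra)) as [D1 D2].
    split; apply is_derive_shift; assumption.
Qed.

Lemma solution_ge_initial T x1 x2 : is_solution_on T x1 x2 ->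
  0 <= F1 (x1 0) (x2 0) -> 0 <= F2 (x1 0) (x2 0) ->
  forall t, 0 <= t <= T -> x1 0 <= x1 t /\ x2 0 <= x2 t.
Proof.
  intros Hsol H1 H2.
  apply (subsolution_le_supersolution T x1 x2 (fun _ => x1 0) (fun _ => x2 0));
    [apply solution_is_supersolution | apply const_subsolution | apply Rle_refl | apply Rle_refl];
    assumption.
Qed.

Lemma solution_le_initial T x1 x2 : is_solution_on T x1 x2 ->
  F1 (x1 0) (x2 0) <= 0 -> F2 (x1 0) (x2 0) <= 0 ->
  forall t, 0 <= t <= T -> x1 t <= x1 0 /\ x2 t <= x2 0.
Proof.
  intros Hsol H1 H2.
  apply (subsolution_le_supersolution T (fun _ => x1 0) (fun _ => x2 0) x1 x2);
    [apply const_supersolution | apply solution_is_subsolution | apply Rle_refl | apply Rle_refl];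
    assumption.
Qed.

Lemma solution_nondecreasing T x1 x2 : is_solution_on T x1 x2 ->
  0 <= F1 (x1 0) (x2 0) -> 0 <= F2 (x1 0) (x2 0) ->
  forall s t, 0 <= s -> s <= t -> t <= T -> x1 s <= x1 t /\ x2 s <= x2 t.
Proof.
  intros Hsol H1 H2 s t Hs Hst HtT.
  destruct (Req_dec s t) as [<-|Hne]; [lra|].
  set (h := t - s).
  assert (Hsh : is_solution_on s (fun u => x1 (u + h)) (fun u => x2 (u + h))).
  { apply solution_on_shift; [lra | unfold h; lra |].
    apply (solution_on_le T); [unfold h; lra | exact Hsol]. }
  destruct (solution_ge_initial T x1 x2 Hsol H1 H2 h ltac:(unfold h; lra)) as [I1 I2].
  destruct (subsolution_le_supersolution s _ _ x1 x2 (solution_is_supersolution _ _ _ Hsh)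
              (solution_is_subsolution _ _ _ (solution_on_le T s x1 x2 ltac:(lra) Hsol)))
    with (t := s) as [C1 C2]; rewrite ?Rplus_0_l; try assumption; try lra.
  replace (s + h) with t in C1, C2 by (unfold h; ring). lra.
Qed.

Lemma solution_nonincreasing T x1 x2 : is_solution_on T x1 x2 ->
  F1 (x1 0) (x2 0) <= 0 -> F2 (x1 0) (x2 0) <= 0 ->
  forall s t, 0 <= s -> s <= t -> t <= T -> x1 t <= x1 s /\ x2 t <= x2 s.
Proof.
  intros Hsol H1 H2 s t Hs Hst HtT.
  destruct (Req_dec s t) as [<-|Hne]; [lra|].
  set (h := t - s).
  assert (Hsh : is_solution_on s (fun u => x1 (u + h)) (fun u => x2 (u + h))).
  { apply solution_on_shift; [lra | unfold h; lra |].
    apply (solution_on_le T); [unfold h; lra | exact Hsol]. }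
  destruct (solution_le_initial T x1 x2 Hsol H1 H2 h ltac:(unfold h; lra)) as [I1 I2].
  destruct (subsolution_le_supersolution s x1 x2 _ _
              (solution_is_supersolution _ _ _ (solution_on_le T s x1 x2 ltac:(lra) Hsol))
              (solution_is_subsolution _ _ _ Hsh))
    with (t := s) as [C1 C2]; rewrite ?Rplus_0_l; try assumption; try lra.
  replace (s + h) with t in C1, C2 by (unfold h; ring). lra.
Qed.

End CooperativeSystem.

Lemma f1_monotone_Ts ga lam q sB ea ba a b b' :
  0 < ga -> 0 <= lam -> 0 <= ea * sB -> b <= b' ->
  f1 ga lam q sB ea ba a b <= f1 ga lam q sB ea ba a b'.
Proof.
  intros Hga Hlam Hes Hb. pose proof (spow4_le b b' Hb). unfold f1, spow4 in *.
  apply Rmult_le_compat_l; [apply Rlt_le, Rinv_0_lt_compat, Hga | nra].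
Qed.

Lemma f2_monotone_Ta gs lam q sB ea bs a a' b :
  0 < gs -> 0 <= lam -> 0 <= ea * sB -> a <= a' ->
  f2 gs lam q sB ea bs a b <= f2 gs lam q sB ea bs a' b.
Proof.
  intros Hgs Hlam Hes Ha. pose proof (spow4_le a a' Ha). unfold f2, spow4 in *.
  apply Rmult_le_compat_l; [apply Rlt_le, Rinv_0_lt_compat, Hgs | nra].
Qed.

Lemma f1_locally_lipschitz2 ga lam q sB ea ba :
  globally_lipschitz ba -> locally_lipschitz2 (f1 ga lam q sB ea ba).
Proof.
  intros Hba.
  apply (locally_lipschitz2_separable _ (/ ga)
    (fun a => (- lam) * a + (- (2 * ea * sB)) * spow4 a + q * ba a)
    (fun b => lam * b + (ea * sB) * spow4 b)).
  - intros a b; unfold f1, spow4; ring.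
  - repeat apply locally_lipschitz_plus; apply locally_lipschitz_scal;
      auto using locally_lipschitz_id, locally_lipschitz_spow4, globally_lipschitz_locally.
  - apply locally_lipschitz_plus; apply locally_lipschitz_scal;
      auto using locally_lipschitz_id, locally_lipschitz_spow4.
Qed.

Lemma f2_locally_lipschitz2 gs lam q sB ea bs :
  globally_lipschitz bs -> locally_lipschitz2 (f2 gs lam q sB ea bs).
Proof.
  intros Hbs.
  apply (locally_lipschitz2_separable _ (/ gs)
    (fun a => lam * a + (ea * sB) * spow4 a)
    (fun b => (- lam) * b + (- sB) * spow4 b + q * bs b)).
  - intros a b; unfold f2, spow4; ring.
  - apply locally_lipschitz_plus; apply locally_lipschitz_scal;
      auto using locally_lipschitz_id, locally_lipschitz_spow4.
  - repeat apply locally_lipschitz_plus; apply locally_lipschitz_scal;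
      auto using locally_lipschitz_id, locally_lipschitz_spow4, globally_lipschitz_locally.
Qed.

Lemma is_solution_on_of_is_solution ga gs lam q sB ea ba bs tau Ta0 Ts0 Ta Ts (T : R) :
  is_solution ga gs lam q sB ea ba bs tau Ta0 Ts0 Ta Ts -> Rbar_lt T tau ->
  is_solution_on (f1 ga lam q sB ea ba) (f2 gs lam q sB ea bs) T Ta Ts.
Proof.
  intros [_ [_ [Ha [Hs Hd]]]] HT. split; [exact Ha|split; [exact Hs|]].
  intros t Ht. apply Hd; [lra|]. apply (Rbar_le_lt_trans _ T); [simpl; lra | exact HT].
Qed.

Theorem lemma4p5
  (ga gs lam q sB ea : R) (ba bs : R -> R)
  (Hga : 0 < ga) (Hgs : 0 < gs) (Hlam : 0 <= lam) (Hq : 0 < q) (HsB : 0 < sB)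
  (Hea : 0 < ea < 2)
  (Hba_lip : globally_lipschitz ba) (Hbs_lip : globally_lipschitz bs)
  (Hba_nn : forall x : R, 0 <= ba x) (Hbs_pos : forall x : R, 0 < bs x)
  (tau : Rbar) (Htau : Rbar_lt 0 tau) (Ta0 Ts0 : R) (Ta Ts : R -> R)
  (Hsol : is_solution ga gs lam q sB ea ba bs tau Ta0 Ts0 Ta Ts) :
  (P_plus ga gs lam q sB ea ba bs Ta0 Ts0 ->
     forall s t : R, 0 <= s -> s <= t -> Rbar_lt t tau ->
       Ta s <= Ta t /\ Ts s <= Ts t) /\
  (P_minus ga gs lam q sB ea ba bs Ta0 Ts0 ->
     forall s t : R, 0 <= s -> s <= t -> Rbar_lt t tau ->
       Ta t <= Ta s /\ Ts t <= Ts s).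
Proof.
  assert (Hes : 0 <= ea * sB) by (apply Rmult_le_pos; lra).
  pose proof (fun a b b' => f1_monotone_Ts ga lam q sB ea ba a b b' Hga Hlam Hes) as Hmono1.
  pose proof (fun a a' b => f2_monotone_Ta gs lam q sB ea bs a a' b Hgs Hlam Hes) as Hmono2.
  pose proof (f1_locally_lipschitz2 ga lam q sB ea ba Hba_lip) as Hlip1.
  pose proof (f2_locally_lipschitz2 gs lam q sB ea bs Hbs_lip) as Hlip2.
  pose proof Hsol as [E0a [E0s _]].
  split; intros [_ [_ [H1 H2]]] s t Hs Hst Ht; rewrite <- E0a, <- E0s in H1, H2.
  - apply (solution_nondecreasing _ _ Hmono1 Hmono2 Hlip1 Hlip2 t); try assumption.
    + exact (is_solution_on_of_is_solution _ _ _ _ _ _ _ _ _ _ _ _ _ _ Hsol Ht).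
    + apply Rle_refl.
  - apply (solution_nonincreasing _ _ Hmono1 Hmono2 Hlip1 Hlip2 t); try assumption.
    + exact (is_solution_on_of_is_solution _ _ _ _ _ _ _ _ _ _ _ _ _ _ Hsol Ht).
    + apply Rle_refl.
Qed.
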